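(* Let $\mathcal{O}=\mathcal{F}_\mathcal{M}/(\mathcal{G})$ be a shuffle operad with monomial relations $\mathcal{G}$, and assume that for every tree monomial $T$ the set of divisors of $T$ that are relations admits an Anick numbering $S_1,\dots,S_p$, which we fix. Then for each tree monomial $T$, a basis of $H^Q_T(\mathcal{O})$ is in one-to-one correspondence with the basis elements $v$ of $(\mathcal{A}_\mathcal{G})^{ab}_T$ for which the following two properties hold: (I) for each $S_j$ present in $v$, $\partial_j(v)$ is decomposable (i.e. equals $0$ in $(\mathcal{A}_\mathcal{G})^{ab}$); (II) for each $S_j$ not present in $v$, there exists $i<j$ such that $\partial_i(v\wedge S_j)$ is indecomposable (i.e. nonzero in $(\mathcal{A}_\mathcal{G})^{ab}$).
   Context: $\mathcal{F}_\mathcal{M}$ is the free shuffle operad on a collection $\mathcal{M}$ over a field; it has a basis of tree monomials. A divisor of a tree monomial $T$ is an occurrence in $T$ of a subtree containing, with each vertex, all its incoming and outgoing edges; it determines a tree monomial by keeping decorations and relabelling leaves in order of the smallest leaf of $T$ reachable through them; it is a relation if this tree monomial lies in $\mathcal{G}$. An Anick numbering of the divisors of $T$ that are relations is a numbering $S_1,\dots,S_p$ such that whenever $i<j<k$ and $S_i\cap S_j\ne\varnothing$ we have $S_i\cap S_k\subset S_j\cap S_k$ (naive intersections of subtrees in $T$). For a tree monomial $T$ with relation divisors $S_1,\dots,S_p$, consider the elements $T\otimes S_{i_1}\wedge\cdots\wedge S_{i_q}$ of $\mathbb{k}T\otimes\Lambda(S_1,\dots,S_p)$ (exterior algebra, $S_i$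 of degree $1$), with the degree $-1$ derivations $\partial_i$, $\partial_i(S_j)=\delta_{ij}$. Such an element is indecomposable if every edge of $T$ joining two internal vertices of $T$ joins two internal vertices of at least one of $S_{i_1},\dots,S_{i_q}$, and decomposable otherwise. $(\mathcal{A}_\mathcal{G})^{ab}_T$ is the chain complex with basis the indecomposable elements with underlying tree monomial $T$ (these are the indecomposable generators of the free dg shuffle operad resolution $\mathcal{A}_\mathcal{G}$ of $\mathcal{O}$ with underlying tree $T$) and differential $\sum_i\bar\partial_i$, where $\bar\partial_i(v)=\partial_i(v)$ if $\partial_i(v)$ is indecomposable and $\bar\partial_i(v)=0$ otherwise; $H^Q_T(\mathcal{O})$ denotes its homology (the $T$-component of the Quillen homology of $\mathcal{O}$, which is the direct sum of these over all $T$). *)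

From HB Require Import structures.
From mathcomp Require Import all_boot all_order all_algebra.
Set Implicit Arguments. Unset Strict Implicit. Unset Printing Implicit Defensive.
Import GRing.Theory.
Local Open Scope ring_scope.

(* The collection M is given by a basis: a type [Gen] of generators,    *)
(* each with an arity.  A tree monomial is a rooted planar tree whose   *)
(* internal vertices are decorated by generators (with as many          *)
(* children as the arity) and whose leaves carry labels 1..n, subject   *)
(* to the shuffle condition (minimal leaves of the children of every    *)
(* vertex increase from left to right).                                 *)

Inductive tmon (Gen : Type) : Type :=
| TLeaf of nat
| TNode of Gen & seq (tmon Gen).
Arguments TLeaf {Gen}.
Arguments TNode {Gen}.

Section TreeMonomials.
Variable Gen : Type.
Implicit Types (t : tmon Gen).

Fixpoint leaves t : seq nat :=
  match t with
  | TLeaf n => [:: n]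
  | TNode _ ts => flatten (map leaves ts)
  end.

Definition minleaf t : nat := let l := leaves t in foldr minn (head 0%N l) l.

Fixpoint wf_shape (arity : Gen -> nat) t : bool :=
  match t with
  | TLeaf _ => true
  | TNode g ts => [&& arity g == size ts, all (wf_shape arity) ts
                    & sorted ltn (map minleaf ts)]
  end.

Definition wf_tmon (arity : Gen -> nat) t : bool :=
  wf_shape arity t && perm_eq (leaves t) (iota 1 (size (leaves t))).

Fixpoint nodes t : seq (seq nat) :=
  match t with
  | TLeaf _ => [::]
  | TNode _ ts =>
      [::] :: (fix aux (i : nat) (ts : seq (tmon Gen)) : seq (seq nat) :=
                 match ts with
                 | [::] => [::]
                 | c :: ts' => map (cons i) (nodes c) ++ aux i.+1 ts'
                 end) 0%N ts
  end.

Fixpoint subtree_at t (p : seq nat) : option (tmon Gen) :=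
  match p with
  | [::] => Some t
  | i :: p' => match t with
               | TLeaf _ => None
               | TNode _ ts => if onth ts i is Some c then subtree_at c p' else None
               end
  end.

Definition nnodes t := size (nodes t).
Definition vpos t (v : 'I_(nnodes t)) : seq nat := nth [::] (nodes t) v.

Definition iedge t (u v : 'I_(nnodes t)) : bool :=
  (vpos v != [::]) && (vpos u == take (size (vpos v)).-1 (vpos v)).

(* A divisor: a nonempty connected set of internal vertices (taken with *)
(* all their incoming and outgoing edges); connected = exactly one      *)
(* vertex of D has no parent in D.                                      *)
Definition is_top t (D : {set 'I_(nnodes t)}) v :=
  (v \in D) && ~~ [exists u in D, iedge u v].

Definition is_divisor t (D : {set 'I_(nnodes t)}) : bool :=
  #|[set v | is_top D v]| == 1%N.

Fixpoint extract (inD : pred (seq nat)) t (p : seq nat) {struct t} : tmon Gen :=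
  match t with
  | TLeaf n => TLeaf n
  | TNode g ts =>
      TNode g ((fix aux (i : nat) (ts : seq (tmon Gen)) : seq (tmon Gen) :=
                  match ts with
                  | [::] => [::]
                  | c :: ts' =>
                      (if inD (rcons p i) then extract inD c (rcons p i)
                       else TLeaf (minleaf c)) :: aux i.+1 ts'
                  end) 0%N ts)
  end.

Fixpoint relabel (f : nat -> nat) t : tmon Gen :=
  match t with
  | TLeaf n => TLeaf (f n)
  | TNode g ts => TNode g (map (relabel f) ts)
  end.

(* keep decorations, relabel leaves in the order of the smallest leaf of *)
(* t reachable through them (labels 1..k)                               *)
Definition divisor_monomial t (D : {set 'I_(nnodes t)}) : tmon Gen :=
  let ptop := if [pick v | is_top D v] is Some v then vpos v else [::] in
  let inD := fun q : seq nat => [exists v in D, vpos v == q] in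
  let e := extract inD (odflt (TLeaf 0%N) (subtree_at t ptop)) ptop in
  relabel (fun x => (count (fun y => y < x)%N (leaves e)).+1) e.

Definition relation_divisor (G : tmon Gen -> Prop) t (D : {set 'I_(nnodes t)}) : Prop :=
  is_divisor D /\ G (divisor_monomial D).

Definition relation_numbering (G : tmon Gen -> Prop) t (S : seq {set 'I_(nnodes t)}) : Prop :=
  uniq S /\ forall D, D \in S <-> relation_divisor G D.

Definition anick t (S : seq {set 'I_(nnodes t)}) : Prop :=
  forall i j k : nat, (i < j)%N -> (j < k)%N -> (k < size S)%N ->
    nth set0 S i :&: nth set0 S j != set0 ->
    nth set0 S i :&: nth set0 S k \subset nth set0 S j :&: nth set0 S k.

(* The complex (A_G)^ab_T.  An element T (x) S_{i1} /\ ... /\ S_{iq}     *)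
(* (i1 < ... < iq) is encoded by the set I = {i1,...,iq} of indices.    *)

Section Complex.
Variable t : tmon Gen.
Variable S : seq {set 'I_(nnodes t)}.
Local Notation p := (size S).
Definition Sd (i : 'I_p) : {set 'I_(nnodes t)} := nth set0 S i.

Definition indec (I : {set 'I_p}) : bool :=
  [forall u, forall v, iedge u v ==> [exists i in I, (u \in Sd i) && (v \in Sd i)]].

Definition indecs : {set {set 'I_p}} := [set I | indec I].

(* coefficient of J in sum_i dbar_i (I), for I, J indecomposable:       *)
(* d_i(S_{i1}/\.../\S_{iq}) = (-1)^(k-1) (... omit S_{ik} ...) if i = ik *)
Definition dcoef (F : fieldType) (I J : {set 'I_p}) : F :=
  \sum_(i in I | J == I :\ i) (-1) ^+ #|[set j in I | (j < i)%N]|.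

Definition dmatrix (F : fieldType) : 'M[F]_(#|indecs|, #|indecs|) :=
  \matrix_(a, b) dcoef F (enum_val a) (enum_val b).

(* dimension of the homology H^Q_T(O) = ker d / im d  (row-vector convention) *)
Definition homology_dim (F : fieldType) : nat :=
  (\rank (kermx (dmatrix F)) - \rank (dmatrix F))%N.

Definition propI (I : {set 'I_p}) : bool :=
  [forall j in I, ~~ indec (I :\ j)].

(* property (II): for S_j not in v, some i < j with d_i(v /\ S_j) nonzero *)
(* in the abelianization, i.e. i in I and (I u {j}) \ {i} indecomposable   *)
Definition propII (I : {set 'I_p}) : bool :=
  [forall j in ~: I, [exists i in I, (i < j)%N && indec ((j |: I) :\ i)]].

Definition critical : {set {set 'I_p}} := [set I in indecs | propI I && propII I].

End Complex.
End TreeMonomials.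

From HB Require Import structures.
From mathcomp Require Import all_boot all_order all_algebra.
From mathcomp Require Import zify.
Set Implicit Arguments. Unset Strict Implicit. Unset Printing Implicit Defensive.
Import GRing.Theory.
Local Open Scope ring_scope.

(* Algebraic discrete Morse theory.  A basis element [v] is critical when it
   satisfies (I) and (II); otherwise let [S_j] be the least index at which one
   of them fails, and match [v] with [v] toggled at [S_j] ([S_j] removed if
   present, added otherwise).  The Anick condition ensures that the toggled
   element fails first at the same [S_j], so that this is a perfect matching
   of the non-critical elements, and that the matching is acyclic: a nonzero
   coefficient of the differential from an element matched with a smaller one
   to another element matched with a larger one increases the least failing
   index.  Matched elements are joined by a coefficient [+-1] and critical
   elements are cycles by (I), so a triangularity argument gives
   [rank d = #matched pairs], whence [dim H = #basis - 2 rank d = #critical]. *)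

Section MorseMatching.
Variables (F : fieldType) (n : nat) (D : 'M[F]_n).
Variables (crit up : pred 'I_n) (mate : 'I_n -> 'I_n) (lev : 'I_n -> nat).
Hypothesis DD0 : D *m D = 0.
Hypothesis crit_row0 : forall a b, crit a -> D a b = 0.
Hypothesis mate_match : forall a, ~~ crit a ->
  [/\ mate (mate a) = a, up (mate a) = ~~ up a & ~~ crit (mate a)].
Hypothesis D_mate : forall u, ~~ crit u -> up u -> D u (mate u) != 0.
Hypothesis lev_mate : forall u b, ~~ crit u -> up u -> D u b != 0 -> b != mate u ->
  ~~ crit b -> ~~ up b -> (lev (mate u) < lev b)%N.

Let ups := [set u | ~~ crit u && up u].
Let downs := [set u | ~~ crit u && ~~ up u].
Let crits := [set u | crit u].

Lemma card_ups_downs : #|ups| = #|downs|.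
Proof.
have mate_inj : {in ups &, injective mate}.
  move=> a b; rewrite !inE => /andP[ca _] /andP[cb _] eab.
  by have [<- _ _] := mate_match ca; have [<- _ _] := mate_match cb; rewrite eab.
rewrite -(card_in_imset mate_inj); suff -> : mate @: ups = downs by [].
apply/setP=> x; apply/imsetP/idP => [[y]|].
  by rewrite !inE => /andP[cy uy] ->; have [_ -> ->] := mate_match cy; rewrite uy.
rewrite inE => /andP[cx ux]; have [mm um cm] := mate_match cx.
by exists (mate x); rewrite // inE cm um ux.
Qed.

Lemma card_cells : n = (#|ups| + #|downs| + #|crits|)%N.
Proof.
have disj A B : A :&: B = set0 -> #|A :|: B| = (#|A| + #|B|)%N.
  by move=> AB0; rewrite -cardsUI AB0 cards0 addn0.
rewrite -disj; last by apply/setP=> x; rewrite !inE; case: (crit x); case: (up x).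
rewrite -disj; last by apply/setP=> x; rewrite !inE; case: (crit x); case: (up x).
rewrite -[LHS]card_ord -cardsT; congr #|pred_of_set _|.
by apply/setP=> x; rewrite !inE; case: (crit x); case: (up x).
Qed.

Let up_enum : 'I_#|ups| -> 'I_n := enum_val.
Let up_rows : 'M[F]_(#|ups|, n) := \matrix_(k, j) D (up_enum k) j.

Lemma up_enumP k : ~~ crit (up_enum k) && up (up_enum k).
Proof. by have := enum_valP k; rewrite inE. Qed.

(* Triangularity: the column of the mate of the up cell of least level in the
   support of a relation meets no other row of that support. *)
Lemma up_rows_free : row_free up_rows.
Proof.
apply: inj_row_free => x x0; apply/rowP=> k0; rewrite mxE.
apply/eqP/negPn/negP=> xk0.
have [k xk kmin] :=
  arg_minnP (fun k => lev (mate (up_enum k))) (xk0 : [pred k | x 0 k != 0] k0).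
have /andP[ck uk] := up_enumP k; have [mmk umk cmk] := mate_match ck.
have := congr1 (fun v : 'rV[F]_n => v 0 (mate (up_enum k))) x0.
rewrite !mxE (bigD1 k) //= big1 ?addr0; last first.
  move=> k' nk'k; rewrite mxE; have [->|xk'] := eqVneq (x 0 k') 0; first by rewrite mul0r.
  have [->|Dk'k] := eqVneq (D (up_enum k') (mate (up_enum k))) 0; first by rewrite mulr0.
  have /andP[ck' uk'] := up_enumP k'; have [mmk' _ _] := mate_match ck'.
  have mate_neq : mate (up_enum k) != mate (up_enum k').
    apply: contra nk'k => /eqP e; apply/eqP/enum_val_inj.
    by rewrite -/(up_enum k) -/(up_enum k') -mmk e mmk'.
  have := lev_mate ck' uk' Dk'k; rewrite mate_neq cmk umk uk => /(_ isT isT isT).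
  by rewrite ltnNge kmin.
by rewrite mxE => /eqP; rewrite mulf_eq0 (negbTE xk) (negbTE (D_mate ck uk)).
Qed.

Lemma row_up_sub u : ~~ crit u -> up u -> (row u D <= up_rows)%MS.
Proof.
move=> cu uu; have uU : u \in ups by rewrite inE cu uu.
have -> : row u D = row (enum_rank_in uU u) up_rows.
  by apply/rowP=> j; rewrite !mxE /up_enum enum_rankK_in.
exact: row_sub.
Qed.

Lemma row_crit0 a : crit a -> row a D = 0.
Proof. by move=> ca; apply/rowP=> j; rewrite !mxE crit_row0. Qed.

(* A down cell [a] is matched with the up cell [u]; expanding [row u D *m D = 0]
   expresses [row a D] through rows of cells of larger level. *)
Lemma row_sub_up_rows_step a :
  (forall b, (lev a < lev b)%N -> (row b D <= up_rows)%MS) -> (row a D <= up_rows)%MS.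
Proof.
move=> IH; have [ca|ca] := boolP (crit a); first by rewrite row_crit0 ?sub0mx.
have [ua|ua] := boolP (up a); first exact: row_up_sub.
have [mm um cm] := mate_match ca; set u := mate a in mm um cm.
have uu : up u by rewrite um ua.
have : row u D *m D = 0 by rewrite -row_mul DD0; apply/rowP=> j; rewrite !mxE.
rewrite mulmx_sum_row (bigD1 a) //=.
have Dua : row u D 0 a != 0 by rewrite mxE -{1}mm D_mate.
set c := row u D 0 a in Dua *; set rest := \sum_(b | b != a) _ => rowu.
have -> : row a D = - c^-1 *: rest.
  have e : c *: row a D = - rest by rewrite -[c *: _](addrK rest) rowu sub0r.
  by rewrite scaleNr -scalerN -e scalerA mulVf // scale1r.
apply: scalemx_sub; apply: summx_sub => b nba.
have [->|Dub] := eqVneq (row u D 0 b) 0; first by rewrite scale0r sub0mx.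
apply: scalemx_sub; rewrite mxE in Dub.
have [cb|cb] := boolP (crit b); first by rewrite row_crit0 ?sub0mx.
have [ub|ub] := boolP (up b); first exact: row_up_sub.
by apply: IH; rewrite -{1}mm lev_mate // mm.
Qed.

Lemma D_sub_up_rows : (D <= up_rows)%MS.
Proof.
apply/row_subP => a; pose N := \max_(b : 'I_n) lev b.
have levN b : (lev b <= N)%N by apply: (leq_bigmax b).
elim: {a}(N - lev a)%N {-2}a (leqnn (N - lev a)) => [|k IH] a hk;
  apply: row_sub_up_rows_step => b ab; [|apply: IH];
  by have := levN b; move: hk ab; lia.
Qed.

Lemma morse_homology_dim : (\rank (kermx D) - \rank D)%N = #|crits|.
Proof.
have rk_up : \rank up_rows = #|ups|.
  by apply/eqP; rewrite eqn_leq rank_leq_row row_leq_rank up_rows_free.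
have rkD : \rank D = #|ups|.
  apply/eqP; rewrite eqn_leq -{1}rk_up mxrankS ?D_sub_up_rows //= -rk_up mxrankS //.
  apply/row_subP=> k; rewrite (_ : row k up_rows = row (up_enum k) D) ?row_sub //.
  by apply/rowP=> j; rewrite !mxE.
by rewrite mxrank_ker rkD {1}card_cells -card_ups_downs; lia.
Qed.
End MorseMatching.

Ltac subset_by_cases :=
  apply/subsetP => ?; rewrite !inE;
  repeat match goal with
  | |- context [?m == ?x] => case: (m == x)
  | |- context [?m \in ?A] => case: (m \in A)
  end; done.

Lemma ord_ltn_neq n (i j : 'I_n) : (i < j)%N -> i != j.
Proof. by move=> ij; apply: contraTneq ij => ->; rewrite ltnn. Qed.

Section AnickMatching.
Variables (Gen : Type) (t : tmon Gen) (S : seq {set 'I_(nnodes t)}).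
Local Notation p := (size S).
Local Notation ind := (@indec _ _ S).
Implicit Types (I J A B : {set 'I_p}) (i j k : 'I_p).

Definition covers i (u v : 'I_(nnodes t)) := (u \in Sd i) && (v \in Sd i).

Lemma indecP I :
  reflect (forall u v, iedge u v -> exists2 i, i \in I & covers i u v) (ind I).
Proof.
apply: (iffP forallP) => [indI u v uv|covI u].
  by have /forallP/(_ v)/implyP/(_ uv)/existsP[i /andP[iI ci]] := indI u; exists i.
apply/forallP=> v; apply/implyP=> uv; have [i iI ci] := covI u v uv.
by apply/existsP; exists i; rewrite iI.
Qed.

Lemma indecS I J : I \subset J -> ind I -> ind J.
Proof.
move=> sIJ /indecP covI; apply/indecP=> u v uv; have [i iI ci] := covI u v uv.
by exists i; rewrite ?(subsetP sIJ).
Qed.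

Lemma indecPn I :
  reflect (exists u v, iedge u v /\ forall i, i \in I -> ~~ covers i u v) (~~ ind I).
Proof.
apply: (iffP idP) => [|[u [v [uv ncov]]]]; last first.
  by apply/negP=> /indecP/(_ u v uv)[i /ncov/negP].
case/forallPn=> u /forallPn[v]; rewrite negb_imply => /andP[uv /existsPn ncov].
by exists u, v; split=> // i iI; have := ncov i; rewrite iI.
Qed.

Lemma pinned_edge A B1 B2 x1 x2 :
    ~~ ind A -> ind B1 -> ind B2 -> B1 \subset x1 |: A -> B2 \subset x2 |: A ->
  exists u v, [/\ covers x1 u v, covers x2 u v & forall m, m \in A -> ~~ covers m u v].
Proof.
case/indecPn=> u [v [uv ncov]] /indecP cov1 /indecP cov2.
have pinned B x : (exists2 m, m \in B & covers m u v) ->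
    B \subset x |: A -> covers x u v.
  case=> m mB cm /subsetP/(_ m mB); rewrite in_setU1.
  by case/orP=> [/eqP <- // | /ncov/negP].
move=> /(pinned _ _ (cov1 u v uv)) c1 /(pinned _ _ (cov2 u v uv)) c2.
by exists u, v.
Qed.

(* [j \in defects I]: the element [I] violates (I) at [S_j] (for [j \in I]) or
   (II) at [S_j] (for [j \notin I]); [I] is critical iff it has no defect. *)
Definition defects I : {set 'I_p} :=
  [set j | if j \in I then ind (I :\ j)
           else [forall i in I, (i < j)%N ==> ~~ ind ((j |: I) :\ i)]].

Definition pivot I : option 'I_p :=
  [pick j in defects I | [forall k in defects I, (j <= k)%N]].

Definition toggle I : {set 'I_p} :=
  if pivot I is Some j then if j \in I then I :\ j else j |: I else I.

Variant pivot_spec I : option 'I_p -> Type :=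
| PivotNone of defects I = set0 : pivot_spec I None
| PivotSome j of j \in defects I & (forall k, k \in defects I -> (j <= k)%N) :
    pivot_spec I (Some j).

Lemma pivotP I : pivot_spec I (pivot I).
Proof.
rewrite /pivot; case: pickP => [j /andP[jD /forallP jmin]|nomin].
  by constructor=> // k kD; have /implyP := jmin k; apply.
constructor; apply/setP=> j; rewrite in_set0; apply/negP=> jD.
have [m mD mmin] := arg_minnP (fun k : 'I_p => val k) jD.
have /negP := nomin m; apply; rewrite /= [m \in _]mD.
by apply/forallP=> k; apply/implyP/mmin.
Qed.

Lemma pivot_eq_None I : (pivot I == None) = (defects I == set0).
Proof.
case: pivotP => [->|j jD _]; first by rewrite eqxx.
by apply/esym/negbTE/set0Pn; exists j.
Qed.

Lemma pivot_min I j :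
  j \in defects I -> (forall k, k \in defects I -> (j <= k)%N) -> pivot I = Some j.
Proof.
move=> jD jmin; case: pivotP => [D0|j' j'D j'min]; first by rewrite D0 inE in jD.
by congr Some; apply/val_inj/eqP; rewrite eqn_leq j'min ?jmin.
Qed.

Lemma defect_in I j : j \in I -> (j \in defects I) = ind (I :\ j).
Proof. by move=> jI; rewrite inE jI. Qed.

Lemma defect_notin I j : j \notin I ->
  reflect (forall i, i \in I -> (i < j)%N -> ~~ ind ((j |: I) :\ i)) (j \in defects I).
Proof.
move=> jI; rewrite inE (negbTE jI).
apply: (iffP forallP) => [jD i iI ij|jD i]; last by apply/implyP=> iI; apply/implyP/jD.
by have /implyP/(_ iI)/implyP := jD i; apply.
Qed.

Lemma pivot_setU1 I j : ind I -> pivot I = Some j -> j \notin I -> pivot (j |: I) = Some j.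
Proof.
move=> indI; case: pivotP => [//|j' jD jmin [ej] jI]; subst j'.
apply: pivot_min => [|k kD]; first by rewrite defect_in ?setU11 ?setU1K.
rewrite leqNgt; apply/negP=> kj.
have [kI|kI] := boolP (k \in I).
  move: kD; rewrite defect_in ?setU1r //; apply/negP.
  exact: (elimT (defect_notin jI) jD k kI kj).
have kJ : k \notin j |: I by rewrite in_setU1 negb_or kI ord_ltn_neq.
have /jmin : k \in defects I.
  apply/defect_notin => // i iI ik.
  move/defect_notin: kD => /(_ kJ i (setU1r _ iI) ik).
  by apply: contra; apply: indecS; apply: setSD; rewrite setUCA subsetUr.
by rewrite leqNgt kj.
Qed.

Lemma toggle_ind I : ind I -> ind (toggle I).
Proof.
rewrite /toggle; case: pivotP => [//|j jD _ indI].
by case: ifP => jI; [rewrite -defect_in | apply: indecS indI; apply: subsetUr].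
Qed.

Hypothesis anickS : anick S.

Lemma anick_cover (a b c : 'I_p) x u v :
    (a < b)%N -> (b < c)%N -> x \in Sd a -> x \in Sd b ->
  covers a u v -> covers c u v -> covers b u v.
Proof.
move=> ab bc xa xb /andP[ua va] /andP[uc vc].
have ab0 : Sd a :&: Sd b != set0 by apply/set0Pn; exists x; rewrite inE xa xb.
have /subsetP acb := anickS ab bc (ltn_ord c) ab0.
have inb w : w \in Sd a -> w \in Sd c -> w \in Sd b.
  by move=> wa wc; have /acb/setIP[] : w \in Sd a :&: Sd c by rewrite inE wa wc.
by rewrite /covers !inb.
Qed.

Lemma pivot_setD1 I j : j \notin I -> pivot (j |: I) = Some j -> pivot I = Some j.
Proof.
move=> jI; case: pivotP => [//|j' jD jmin [ej]]; subst j'.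
have indI : ind I by rewrite defect_in ?setU11 // setU1K in jD.
have nJ i : i \in I -> (i < j)%N -> ~~ ind ((j |: I) :\ i).
  move=> iI ij; rewrite -defect_in ?setU1r //; apply/negP=> /jmin.
  by rewrite leqNgt ij.
apply: pivot_min => [|k kD]; first exact/defect_notin.
rewrite leqNgt; apply/negP=> kj.
have [kI|kI] := boolP (k \in I).
  have /jmin : k \in defects (j |: I).
    rewrite defect_in ?setU1r //; move: kD; rewrite defect_in //.
    by apply: indecS; apply: setSD; apply: subsetUr.
  by rewrite leqNgt kj.
have kJ : k \notin j |: I by rewrite in_setU1 negb_or kI ord_ltn_neq.
have /jmin : k \in defects (j |: I).
  apply/defect_notin => // i iJ ik; have ij := ltn_trans ik kj.
  have iI : i \in I.
    by move: iJ; rewrite in_setU1 => /orP[/eqP eij|//]; rewrite eij ltnn in ij.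
  apply/negP=> indX.
  have [u [v [cj ci ncov]]] := pinned_edge (x1 := j) (x2 := i)
    (elimT (defect_notin kI) kD i iI ik) indX indI
    ltac:(subset_by_cases) ltac:(subset_by_cases).
  have [u' [v' [/andP[u'k _] /andP[u'i _] _]]] := pinned_edge (x1 := k) (x2 := i)
    (nJ i iI ij) indX indI ltac:(subset_by_cases) ltac:(subset_by_cases).
  have kA : k \in (k |: I) :\ i by rewrite !inE eqxx eq_sym ord_ltn_neq.
  by case/negP: (ncov k kA); apply: anick_cover ik kj u'i u'k ci cj.
by rewrite leqNgt kj.
Qed.

Lemma pivot_toggle I : ind I -> pivot (toggle I) = pivot I.
Proof.
move=> indI; rewrite /toggle; case pI: (pivot I) => [j|]; last exact: pI.
have [jI|jI] := ifPn; last exact: pivot_setU1.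
by apply: pivot_setD1; [rewrite setD11 | rewrite setD1K].
Qed.

Lemma mem_pivot_toggle I j : pivot I = Some j -> (j \in toggle I) = (j \notin I).
Proof. by rewrite /toggle => ->; case: ifPn => jI; rewrite ?setD11 ?setU11 ?jI. Qed.

Lemma toggleK I : ind I -> toggle (toggle I) = I.
Proof.
move=> indI; rewrite {1}/toggle pivot_toggle //.
case pI: (pivot I) => [j|]; last by rewrite /toggle pI.
rewrite (mem_pivot_toggle pI) /toggle pI.
by have [jI|jI] := boolP (j \in I); rewrite ?jI ?(negbTE jI) /= ?setD1K ?setU1K.
Qed.

(* Acyclicity: [j |: I] is matched with [I], and [d] sends it with a nonzero
   coefficient to each [(j |: I) :\ i]; when that one is a lower matched cell
   its pivot is larger. *)
Lemma pivot_lt I i j j' : ind I -> pivot I = Some j -> j \notin I -> i \in I ->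
    ind ((j |: I) :\ i) -> pivot ((j |: I) :\ i) = Some j' -> j' \notin (j |: I) :\ i ->
  (j < j')%N.
Proof.
move=> indI; case: pivotP => [//|j0 jD jmin [ej] jI iI indB]; subst j0.
case: pivotP => [//|j0 j'D _ [ej'] j'B]; subst j0.
have ji : (j < i)%N.
  case: ltngtP => // [ij|/val_inj eij]; last by rewrite eij iI in jI.
  by have := elimT (defect_notin jI) jD i iI ij; rewrite indB.
have jB : j \in (j |: I) :\ i by rewrite !inE eqxx ord_ltn_neq.
rewrite ltn_neqAle; apply/andP; split; first by apply: contraNneq j'B => /val_inj <-.
rewrite leqNgt; apply/negP=> j'j.
have j'I : j' \notin I.
  by apply: contra j'B => j'I; rewrite !inE j'I orbT ord_ltn_neq ?(ltn_trans j'j).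
have /jmin : j' \in defects I.
  apply/defect_notin => // k kI kj'; have kj := ltn_trans kj' j'j.
  have kB : k \in (j |: I) :\ i by rewrite !inE kI orbT ord_ltn_neq ?(ltn_trans kj).
  apply/negP=> indX.
  have [u [v [ci ck ncov]]] := pinned_edge (x1 := i) (x2 := k)
    (elimT (defect_notin j'B) j'D k kB kj') indX indB
    ltac:(subset_by_cases) ltac:(subset_by_cases).
  have [u' [v' [/andP[u'k _] /andP[u'j' _] _]]] := pinned_edge (x1 := k) (x2 := j')
    (elimT (defect_notin jI) jD k kI kj) indI indX
    ltac:(subset_by_cases) ltac:(subset_by_cases).
  have j'A : j' \in (j' |: (j |: I) :\ i) :\ k by rewrite !inE eqxx eq_sym ord_ltn_neq.
  by case/negP: (ncov j' j'A); apply: anick_cover kj' (ltn_trans j'j ji) u'k u'j' ck ci.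
by rewrite leqNgt j'j.
Qed.

End AnickMatching.

Section Differential.
Variables (F : fieldType) (Gen : Type) (t : tmon Gen) (S : seq {set 'I_(nnodes t)}).
Local Notation p := (size S).
Implicit Types (A B C : {set 'I_p}) (i k : 'I_p).

Definition wedge_sign A i : F := (-1) ^+ #|[set j in A | (j < i)%N]|.

Lemma wedge_sign_neq0 A i : wedge_sign A i != 0.
Proof. by rewrite expf_neq0 // oppr_eq0 oner_neq0. Qed.

Lemma wedge_sign_swap A i k : i \in A -> (i < k)%N ->
  wedge_sign A i * wedge_sign (A :\ i) k = - (wedge_sign A k * wedge_sign (A :\ k) i).
Proof.
move=> iA ik; rewrite /wedge_sign.
have -> : [set j in A | (j < k)%N] = i |: [set j in A :\ i | (j < k)%N].
  by apply/setP=> j; rewrite !inE; case: (eqVneq j i) => [->|]; rewrite ?iA ?ik.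
have -> : [set j in A :\ k | (j < i)%N] = [set j in A | (j < i)%N].
  apply/setP=> j; rewrite !inE; case: (eqVneq j k) => [->|] //=.
  by rewrite ltnNge (ltnW ik) andbF.
by rewrite cardsU1 !inE eqxx /= exprS mulN1r mulNr opprK mulrC.
Qed.

Lemma dcoef_neq0 A B : dcoef F A B != 0 -> exists2 i, i \in A & B = A :\ i.
Proof.
move=> nz; have /existsP[i /andP[iA /eqP ->]] : [exists i in A, B == A :\ i].
  by apply: contraNT nz => /existsPn noi; rewrite /dcoef big_pred0 // => i; apply/negbTE/noi.
by exists i.
Qed.

Lemma dcoef_setD1 A i : i \in A -> dcoef F A (A :\ i) = wedge_sign A i.
Proof.
move=> iA; rewrite /dcoef (big_pred1 i) // => k /=.
case: (eqVneq k i) => [->|ki]; first by rewrite iA eqxx.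
apply/negbTE/negP => /andP[kA /eqP eA]; have := setD11 k A.
by rewrite -eA !inE kA ki.
Qed.

Lemma dcoef_comp A C :
  \sum_(B : {set 'I_p}) dcoef F A B * dcoef F B C =
  \sum_(q : 'I_p * 'I_p | [&& q.1 \in A, q.2 \in A :\ q.1 & C == A :\ q.1 :\ q.2])
     wedge_sign A q.1 * wedge_sign (A :\ q.1) q.2.
Proof.
transitivity (\sum_(i in A) wedge_sign A i * dcoef F (A :\ i) C).
  under eq_bigr => B _ do rewrite {1}/dcoef big_mkcondr big_distrl /=.
  rewrite exchange_big /=; apply: eq_bigr => i iA.
  rewrite (bigD1 (A :\ i)) //= eqxx big1 ?addr0 // => B /negbTE->.
  by rewrite mul0r.
under eq_bigr => i _ do rewrite /dcoef mulr_sumr.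
by rewrite pair_big_dep.
Qed.

Lemma dcoef_sq A C : \sum_(B : {set 'I_p}) dcoef F A B * dcoef F B C = 0.
Proof.
rewrite dcoef_comp (bigID (fun q : 'I_p * 'I_p => (q.1 < q.2)%N)) /=.
have swapK : involutive (fun q : 'I_p * 'I_p => (q.2, q.1)) by case.
rewrite [X in _ + X](reindex_inj (inv_inj swapK)) /=.
rewrite [X in _ + X](eq_bigl (fun q : 'I_p * 'I_p =>
  [&& q.1 \in A, q.2 \in A :\ q.1 & C == A :\ q.1 :\ q.2] && (q.1 < q.2)%N)); last first.
  move=> [i k] /=; rewrite !in_setD1 [A :\ k :\ i]setDDl setUC -setDDl.
  case: ltngtP => [ik|ki|/val_inj->]; rewrite ?eqxx ?andbF //=.
  by rewrite [k == i]eq_sym; case: (i \in A); case: (k \in A); rewrite ?andbF.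
rewrite -big_split big1 //= => -[i k] /andP[/and3P[iA _ _] ik] /=.
by rewrite wedge_sign_swap // addNr.
Qed.

(* Decomposable elements span a subcomplex ([indecS]), so truncating the
   differential to indecomposable elements keeps [d^2 = 0]. *)
Lemma dmatrix_sq : dmatrix S F *m dmatrix S F = 0.
Proof.
apply/matrixP=> a c; rewrite !mxE -[RHS](dcoef_sq (enum_val a) (enum_val c)).
pose f B := dcoef F (enum_val a) B * dcoef F B (enum_val c).
rewrite (eq_bigr (f \o enum_val)) => [|b _]; last by rewrite !mxE.
rewrite -(big_enum_val f) [RHS](bigID (mem (indecs S))) /=.
rewrite [X in _ = _ + X]big1 ?addr0 // => B nB.
have [->|/dcoef_neq0[i _ eC]] := eqVneq (dcoef F B (enum_val c)) 0; first by rewrite mulr0.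
case/negP: nB; have := enum_valP c; rewrite !inE eC; apply: indecS; exact: subD1set.
Qed.
End Differential.

Section CriticalCells.
Variables (F : fieldType) (Gen : Type) (t : tmon Gen) (S : seq {set 'I_(nnodes t)}).
Hypothesis anickS : anick S.
Local Notation p := (size S).
Local Notation ind := (@indec _ _ S).
Local Notation n := #|indecs S|.
Local Notation cell := (@enum_val _ (mem (indecs S))).

Definition critical_cell (a : 'I_n) : bool := pivot (cell a) == None.
Definition upper_cell (a : 'I_n) : bool :=
  if pivot (cell a) is Some j then j \in cell a else false.
Definition cell_level (a : 'I_n) : nat :=
  if pivot (cell a) is Some j then j : nat else 0%N.
Definition cell_mate (a : 'I_n) : 'I_n := enum_rank_in (enum_valP a) (toggle (cell a)).

Lemma indec_cell a : ind (cell a).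
Proof. by have := enum_valP a; rewrite inE. Qed.

Lemma cell_mateE a : cell (cell_mate a) = toggle (cell a).
Proof. by rewrite enum_rankK_in // inE toggle_ind ?indec_cell. Qed.

Lemma pivot_cell_mate a : pivot (cell (cell_mate a)) = pivot (cell a).
Proof. by rewrite cell_mateE pivot_toggle ?indec_cell. Qed.

Lemma critical_cell_row0 a b : critical_cell a -> dmatrix S F a b = 0.
Proof.
rewrite mxE /critical_cell => /eqP; case: pivotP => // D0 _; apply/eqP.
apply: contraT => /dcoef_neq0[i ia eb]; have := indec_cell b.
by rewrite eb -defect_in // D0 inE.
Qed.

Lemma cell_mate_match a : ~~ critical_cell a ->
  [/\ cell_mate (cell_mate a) = a, upper_cell (cell_mate a) = ~~ upper_cell a
    & ~~ critical_cell (cell_mate a)].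
Proof.
rewrite /critical_cell /upper_cell !pivot_cell_mate.
case pa: (pivot (cell a)) => [j|] // _; split=> //.
  by apply: enum_val_inj; rewrite !cell_mateE toggleK ?indec_cell.
by rewrite cell_mateE mem_pivot_toggle.
Qed.

Lemma dmatrix_cell_mate u : upper_cell u -> dmatrix S F u (cell_mate u) != 0.
Proof.
rewrite /upper_cell mxE cell_mateE /toggle.
by case: (pivot (cell u)) => // j ju; rewrite ju dcoef_setD1 ?wedge_sign_neq0.
Qed.

Lemma cell_level_mate u b : upper_cell u -> dmatrix S F u b != 0 ->
    b != cell_mate u -> ~~ critical_cell b -> ~~ upper_cell b ->
  (cell_level (cell_mate u) < cell_level b)%N.
Proof.
have mateE := cell_mateE u; have indI := indec_cell (cell_mate u).
rewrite /critical_cell /upper_cell /cell_level pivot_cell_mate mxE.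
case pu: (pivot (cell u)) => [j|] // ju /dcoef_neq0[i iu eb] bm.
case pb: (pivot (cell b)) => [j'|] // _ j'b.
rewrite /toggle pu ju in mateE; rewrite mateE in indI.
have pI : pivot (cell u :\ j) = Some j by rewrite -mateE pivot_cell_mate.
have eu : cell u = j |: (cell u :\ j) by rewrite setD1K.
have iI : i \in cell u :\ j.
  rewrite in_setD1 iu andbT; apply: contraNneq bm => eij.
  by apply/eqP/enum_val_inj; rewrite mateE eb eij.
apply: (pivot_lt anickS indI pI (negbT (setD11 _ _)) iI);
  by rewrite -eu -eb ?indec_cell.
Qed.

Lemma propI_propII_defects (I : {set 'I_p}) :
  (propI I && propII I) = (defects I == set0).
Proof.
apply/andP/eqP => [[/forallP hI /forallP hII]|D0].
  apply/setP=> j; rewrite inE in_set0; case: ifPn => jI.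
    by have := hI j; rewrite jI => /negbTE.
  have := hII j; rewrite inE jI /= => /existsP[i /and3P[iI ij indX]].
  by apply/negbTE/forallPn; exists i; rewrite iI ij indX.
split; apply/forallP => j; apply/implyP => jI; move/setP/(_ j): D0; rewrite inE in_set0.
  by rewrite jI => ->.
rewrite inE in jI; rewrite (negbTE jI) => /negbT/forallPn[i].
rewrite negb_imply => /andP[iI]; rewrite negb_imply negbK => /andP[ij indX].
by apply/existsP; exists i; rewrite iI ij indX.
Qed.

Lemma card_critical_cells : #|[set a | critical_cell a]| = #|critical S|.
Proof.
rewrite -(card_imset _ enum_val_inj); congr (fun A => #|pred_of_set A|).
apply/setP => I; rewrite /critical inE propI_propII_defects.
apply/imsetP/andP => [[a]|[IK D0]].
  by rewrite inE /critical_cell pivot_eq_None => /eqP D0 ->; rewrite enum_valP D0.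
exists (enum_rank_in IK I); rewrite ?enum_rankK_in //.
by rewrite inE /critical_cell enum_rankK_in // pivot_eq_None.
Qed.

Lemma homology_dim_critical : homology_dim S F = #|critical S|.
Proof.
rewrite /homology_dim -card_critical_cells.
exact: (morse_homology_dim (dmatrix_sq F S) (@critical_cell_row0) cell_mate_match
  (fun u _ => @dmatrix_cell_mate u) (fun u b _ => @cell_level_mate u b)).
Qed.
End CriticalCells.

Theorem mainTheorem3 (F : fieldType) (Gen : Type) (arity : Gen -> nat)
    (G : tmon Gen -> Prop)
    (num : forall T : tmon Gen, seq {set 'I_(nnodes T)}) :
  (forall T : tmon Gen, wf_tmon arity T ->
     relation_numbering G (num T) /\ anick (num T)) ->
  forall T : tmon Gen, wf_tmon arity T ->
    homology_dim (num T) F = #|critical (num T)|.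
Proof.
move=> numbering T wfT; have [_ anickT] := numbering T wfT.
exact: homology_dim_critical.
Qed.
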